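(* Let $V$ be a ground model, $\kappa$ an infinite cardinal, and $\mathbb{A}\in V$ an infinite Boolean algebra. Then for every $\varepsilon>0$ there are $\mathbb{M}_\kappa$-names $\dot{\mathcal{U}}$ and $\dot{\mathcal{V}}$ for ultrafilters on $\mathbb{A}$ such that $\Vdash_{\mathbb{M}_\kappa}\dot{\mathcal{U}}\neq\dot{\mathcal{V}}$, and for every $p\in\mathbb{M}_\kappa$ for which there is $A\in\mathbb{A}$ with $p\Vdash A\in\dot{\mathcal{U}}\setminus\dot{\mathcal{V}}$ we have $\lambda_\kappa(p)\le 1/4+\varepsilon$.
   Context: $\mathbb{M}_\kappa=Bor(2^\kappa)/\mathcal{N}_\kappa$ is the measure algebra of the standard product measure $\lambda_\kappa$ on $2^\kappa$ ($\lambda_\kappa$ also denotes the induced measure on $\mathbb{M}_\kappa$), used as a forcing notion (conditions are nonzero elements). An $\mathbb{M}_\kappa$-name for an ultrafilter on $\mathbb{A}$ is a name $\dot{\mathcal{U}}$ with $\Vdash_{\mathbb{M}_\kappa}$ ''$\dot{\mathcal{U}}$ is an ultrafilter on $\mathbb{A}$''. *)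

From HB Require Import structures.
From mathcomp Require Import all_boot all_order all_algebra.
From mathcomp Require Import all_classical all_reals all_analysis.
Set Implicit Arguments. Unset Strict Implicit. Unset Printing Implicit Defensive.
Import Order.TTheory GRing.Theory Num.Theory.
Local Open Scope classical_set_scope.
Local Open Scope ring_scope.

Definition cylinder (K : choiceType) (F : seq K) (s : K -> bool) : set (K -> bool) :=
  [set x | forall i, i \in F -> x i = s i].

Definition cylinders (K : choiceType) : set (set (K -> bool)) :=
  [set C | exists F s, uniq F /\ C = cylinder F s].

Definition cantorT (K : choiceType) := g_sigma_algebraType (@cylinders K).

(* mu is the standard product measure lambda_K: each coordinate is a fair coin,
   i.e. a cylinder fixing n coordinates has measure 2^-n.  (This determines mu
   uniquely on the product sigma-algebra, by the pi-lambda theorem.) *)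
Definition is_std_product_measure (R : realType) (K : choiceType)
  (mu : {measure set (cantorT K) -> \bar R}) : Prop :=
  forall (F : seq K) (s : K -> bool), uniq F ->
    mu (cylinder F s : set (cantorT K)) = ((2%:R ^- size F : R))%:E.

(* almost-everywhere equality of sets = equality in the measure algebra M_K *)
Definition meq (R : realType) (K : choiceType)
  (mu : {measure set (cantorT K) -> \bar R}) (X Y : set (cantorT K)) : Prop :=
  mu ((X `\` Y) `|` (Y `\` X)) = 0%E.

(* An M_K-name for an ultrafilter on the ground-model Boolean algebra A, given
   (in Boolean-valued form) by the map a |-> [[ a \in U ]] : A -> M_K, which must
   be a Boolean homomorphism into the measure algebra.  Elements of M_K are
   represented by measurable sets modulo mu-null sets. *)
Definition uf_name (R : realType) (K : choiceType)
  (mu : {measure set (cantorT K) -> \bar R})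
  (d : Order.disp_t) (A : ctbDistrLatticeType d) (U : A -> set (cantorT K)) : Prop :=
  [/\ (forall a, measurable (U a)),
      meq mu (U Order.top) setT,
      (forall a b, meq mu (U (Order.meet a b)) (U a `&` U b)) &
      (forall a, meq mu (U (Order.compl a)) (~` U a))].

(* condition p (measurable P with mu P > 0) forces a \in U \ V *)
Definition forces_in_diff (R : realType) (K : choiceType)
  (mu : {measure set (cantorT K) -> \bar R})
  (d : Order.disp_t) (A : ctbDistrLatticeType d) (U V : A -> set (cantorT K))
  (P : set (cantorT K)) (a : A) : Prop :=
  mu (P `\` (U a `\` V a)) = 0%E.

(* ||- U <> V : no condition forces U = V, i.e. every condition P is compatible
   with [[ a \in U ]] Delta [[ a \in V ]] for some a. *)
Definition forces_neq (R : realType) (K : choiceType)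
  (mu : {measure set (cantorT K) -> \bar R})
  (d : Order.disp_t) (A : ctbDistrLatticeType d) (U V : A -> set (cantorT K)) : Prop :=
  forall P : set (cantorT K), measurable P -> (0 < mu P)%E ->
    exists a : A, (0 < mu (P `&` ((U a `\` V a) `|` (V a `\` U a))))%E.

(* Fix 2t coordinates of 2^K: under the product measure they are two
   independent uniform random elements u, v of I = 2^t, with N = #|I| = 2^t.
   An infinite Boolean algebra carries N distinct ultrafilters h_i (by the
   ultrafilter lemma, applied to a nonzero element lying in none of finitely
   many given ultrafilters).  Let U = h_u and V = h_v, except on the diagonal
   u = v (of measure 1/N), where V = h_u' for the complement u' of u.  Then
   U <> V everywhere, and if k of the h_i contain a, the event a \in U \ V
   has measure at most (k (N - k) + N) / N^2 <= 1/4 + 1/N; a condition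
   forcing a \in U \ V is contained in that event. *)

From HB Require Import structures.
From mathcomp Require Import all_boot all_order all_algebra.
From mathcomp Require Import all_classical all_reals all_analysis.
From mathcomp Require Import zify ring lra.
Import Order.TTheory GRing.Theory Num.Theory.
Local Open Scope classical_set_scope.
Local Open Scope ring_scope.

Set Implicit Arguments. Unset Strict Implicit.

Section BooleanAlgebraHoms.
Local Open Scope order_scope.
Variables (d : Order.disp_t) (A : ctbDistrLatticeType d).
Implicit Types (a b x y : A) (X : set A).

Definition bool_hom (h : A -> bool) :=
  [/\ h \top, {morph h : a b / a `&` b >-> a && b} & {morph h : a / ~` a >-> ~~ a}].

Definition proper_filter X :=
  [/\ forall x y, X x -> x <= y -> X y, forall x y, X x -> X y -> X (x `&` y)
    & ~ X \bot].

Lemma exists_maximal_filter b : b != \bot ->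
  exists2 M, proper_filter M /\ M b &
    forall X, proper_filter X -> M `<=` X -> X = M.
Proof.
move=> b0.
(* the disjunct [X = set0] makes the union of the empty chain admissible *)
pose Pb X := proper_filter X /\ (X = set0 \/ X b).
have [M [[Mf Mb0] maxM]] : exists M, Pb M /\ forall X, M `<` X -> ~ Pb X.
  apply: Zorn_bigcup => F FP Ftot; split; first split.
  - move=> x y [X FX Xx] xy; exists X => //.
    by have [[up _ _] _] := FP X FX; exact: up xy.
  - move=> x y [X FX Xx] [Y FY Yy].
    have [XY|YX] := Ftot X Y FX FY.
      by exists Y => //; have [[_ mI _] _] := FP Y FY; apply: mI (XY _ Xx) Yy.
    by exists X => //; have [[_ mI _] _] := FP X FX; apply: mI Xx (YX _ Yy).
  - by move=> [X FX]; have [[_ _ nbot] _] := FP X FX.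
  - have [[X FX Xb]|nX] := pselect (exists2 X, F X & X b); first by right; exists X.
    left; apply/seteqP; split => // x [X FX Xx].
    by have [_ [X0|Xb]] := FP X FX; [rewrite X0 in Xx|case: nX; exists X].
have Mb : M b.
  case: Mb0 => // M0; exfalso; apply: (maxM [set y | b <= y]).
    by rewrite M0; split => [//|/(_ b (lexx b))].
  split; last by right; exact: lexx.
  split=> [x y /= bx /(le_trans bx)//|x y /= bx bY|/=]; first by rewrite lexI bx.
  by rewrite lex0 (negbTE b0).
exists M => // X Xf MX; apply: contrapT => XM; apply: (maxM X); last first.
  by split=> //; right; exact: MX.
by split=> // XsubM; apply: XM; apply/seteqP.
Qed.

Lemma maximal_filter_compl M :
  proper_filter M -> (exists b, M b) ->
  (forall X, proper_filter X -> M `<=` X -> X = M) ->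
  forall a, ~ M a -> M (~` a).
Proof.
move=> [Mup Mmeet Mbot] [b Mb] maxM a Ma.
pose Ma' := [set y | exists2 x, M x & x `&` a <= y].
have MMa' : M `<=` Ma' by move=> x Mx; exists x => //; exact: leIl.
have [x Mx xa] : Ma' \bot.
  apply: contrapT => Ma'bot; apply: Ma; rewrite -(maxM Ma') //.
    by exists b => //; exact: leIr.
  split=> // [x y [z Mz za] /(le_trans za)|x y [z Mz za] [w Mw wa]]; first by exists z.
  exists (z `&` w); first exact: Mmeet.
  by apply: le_trans (leI2 za wa); rewrite meetACA meetxx.
by apply: Mup Mx _; rewrite -Order.CTBDistrLatticeTheory.disj_leC -lex0.
Qed.

Lemma exists_bool_hom b : b != \bot -> exists2 h, bool_hom h & h b.
Proof.
move=> /exists_maximal_filter[M [Mf Mb] maxM].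
have Mcompl := maximal_filter_compl Mf (ex_intro _ b Mb) maxM.
have [Mup Mmeet Mbot] := Mf.
exists (fun a => `[< M a >]); last exact/asboolP.
split.
- by apply/asboolP; apply: Mup Mb _; exact: lex1.
- move=> x y; apply/asboolP/andP => [Mxy|[/asboolP Mx /asboolP My]]; last exact: Mmeet.
  by split; apply/asboolP; apply: Mup Mxy _; [exact: leIl|exact: leIr].
- move=> x; apply/asboolP/idP => [Mcx|/asboolP/Mcompl//].
  apply/negP => /asboolP Mx; apply: Mbot.
  by rewrite -(Order.CTBDistrLatticeTheory.meetxC x); exact: Mmeet.
Qed.

Lemma exists_nonbot_in_no_hom (I : finType) (hs : I -> A -> bool) :
  infinite_set [set: A] -> (forall i, bool_hom (hs i)) ->
  exists2 c, c != \bot & forall i, ~~ hs i c.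
Proof.
move=> Ainf hom; apply: contrapT => nc.
(* otherwise [a |-> (hs i a)_i] would embed [A] into a finite type *)
apply: Ainf; apply: (@finite_preimage _ _ setT (fun a => [ffun i => hs i a])) => //.
have le_hom x y : (forall i, hs i x = hs i y) -> x <= y.
  move=> exy; rewrite -[y]Order.CTBDistrLatticeTheory.complK.
  rewrite -Order.CTBDistrLatticeTheory.disj_leC; apply/negPn/negP => c0.
  apply: nc; exists (x `&` ~` y) => // i.
  by have [_ hI hC] := hom i; rewrite hI hC exy andbN.
move=> a a' _ _ /ffunP eqa; apply/eqP; rewrite eq_le !le_hom // => i;
  by have := eqa i; rewrite !ffunE.
Qed.

Lemma exists_injective_bool_homs_ord n : infinite_set [set: A] ->
  exists hs : 'I_n -> A -> bool, (forall i, bool_hom (hs i)) /\ injective hs.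
Proof.
move=> Ainf; elim: n => [|n [hs [hom hs_inj]]].
  by exists (fun _ _ => true); split=> [[]|[]].
have [c c0 hs_c] := exists_nonbot_in_no_hom Ainf hom.
have [h hh hc] := exists_bool_hom c0.
pose hs' (i : 'I_n.+1) := if unlift ord_max i is Some j then hs j else h.
exists hs'; split=> [i|i j]; first by rewrite /hs'; case: unliftP.
rewrite /hs'; case: (unliftP ord_max i) => [i' ->|->];
  case: (unliftP ord_max j) => [j' ->|->] //.
- by move=> /hs_inj ->.
- by move=> /(congr1 (@^~ c)); rewrite hc (negbTE (hs_c i')).
- by move=> /(congr1 (@^~ c)); rewrite hc (negbTE (hs_c j')).
Qed.

Lemma exists_injective_bool_homs (I : finType) : infinite_set [set: A] ->
  exists h : I -> A -> bool, (forall i, bool_hom (h i)) /\ injective h.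
Proof.
move=> /(exists_injective_bool_homs_ord #|I|)[hs [hom hs_inj]].
by exists (hs \o enum_rank); split=> [i|]; [exact: hom|exact: inj_comp enum_rank_inj].
Qed.
End BooleanAlgebraHoms.

Lemma exists_injective_of_infinite (J : finType) (K : Type) :
  infinite_set [set: K] -> exists e : J -> K, injective e.
Proof.
elim/Ppointed: K => K; first by rewrite emptyE => /(_ (finite_set0 K)).
move=> /infiniteP/pcard_injP[f f_inj].
exists (f \o enum_rank) => i j fij; apply/enum_rank_inj/val_inj.
by apply: f_inj fij; rewrite in_setT.
Qed.

Section FiniteFibers.
Context d (T : measurableType d) (R : realType) (mu : {measure set T -> \bar R}).
Variables (P : finType) (pi : T -> P).
Hypothesis measurable_fiber : forall p, measurable (pi @^-1` [set p]).

Lemma measurable_preimage_fin (W : set P) : measurable (pi @^-1` W).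
Proof.
have -> : pi @^-1` W = \bigcup_(p in W) pi @^-1` [set p].
  apply/seteqP; split=> [x Wx|x [p Wp px]]; first by exists (pi x).
  by rewrite /preimage /= px.
by apply: fin_bigcup_measurable => [|p _]; [exact: finite_finset|exact: measurable_fiber].
Qed.

Lemma measure_sum_fibers (X : set T) : measurable X ->
  mu X = (\sum_(p : P) mu (X `&` pi @^-1` [set p]))%E.
Proof.
move=> mX; have XE : X = \bigcup_(p in [set: P]) (X `&` pi @^-1` [set p]).
  by apply/seteqP; split=> [x Xx|x [p _ []//]]; exists (pi x).
rewrite {1}XE measure_fin_bigcup //.
- rewrite (fsbigE (enum P)) ?enum_uniq //; last by move=> p _; rewrite mem_enum.
  by rewrite big_enum_cond; apply: eq_bigl => p; rewrite in_setT.
- exact: finite_finset.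
- by move=> p q _ _ [x [[_ <-] [_ <-]]].
- by move=> p _; apply: measurableI.
Qed.

Lemma measure_preimage_uniform (c : R) :
  (forall p, mu (pi @^-1` [set p]) = c%:E) ->
  forall W : {pred P}, mu (pi @^-1` [set p | W p]) = (#|W|%:R * c)%:E.
Proof.
move=> mu_fiber W; rewrite measure_sum_fibers; last exact: measurable_preimage_fin.
rewrite (bigID W) /= [X in (_ + X)%E]big1 ?adde0 => [|p Wp]; last first.
  rewrite -(measure0 mu); congr (mu _).
  by apply/seteqP; split=> x //= [Wx px]; rewrite -px Wx in Wp.
rewrite (eq_bigr (fun=> c%:E)) => [|p Wp]; last first.
  rewrite -(mu_fiber p); congr (mu _).
  by apply/seteqP; split=> [x []//|x /= px]; rewrite px.
by rewrite sumEFin sumr_const mulr_natl.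
Qed.

Lemma exists_fiber_meets (X : set T) : measurable X -> (0 < mu X)%E ->
  exists p, (0 < mu (X `&` pi @^-1` [set p]))%E.
Proof.
move=> mX X0; apply: contrapT => nfib; move: X0.
rewrite measure_sum_fibers // big1 ?ltxx // => p _.
apply/eqP; rewrite eq_le measure_ge0 andbT leNgt; apply/negP => Xp0.
by apply: nfib; exists p.
Qed.
End FiniteFibers.

Section Coordinates.
Variables (R : realType) (K : choiceType) (mu : {measure set (cantorT K) -> \bar R}).
Hypothesis mu_std : is_std_product_measure mu.
Variables (J : finType) (e : J -> K).
Hypothesis e_inj : injective e.

Definition coords (x : cantorT K) : {ffun J -> bool} := [ffun j => x (e j)].

Lemma coords_fiberE s : coords @^-1` [set s] =
  cylinder (map e (enum J)) (fun k => [exists j, (e j == k) && s j]).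
Proof.
have extE j : [exists i, (e i == e j) && s i] = s j.
  by apply/existsP/idP => [[i /andP[/eqP/e_inj -> //]]|sj]; exists j; rewrite eqxx.
apply/seteqP; split=> x /=.
  by move=> xs _ /mapP[j _ ->]; rewrite extE -xs ffunE.
by move=> xs; apply/ffunP => j; rewrite ffunE -extE; apply: xs; rewrite map_f ?mem_enum.
Qed.

Lemma measurable_coords_fiber s : measurable (coords @^-1` [set s]).
Proof.
rewrite coords_fiberE; apply: sub_gen_smallest; do 2 eexists; split; last by [].
by rewrite (map_inj_uniq e_inj) enum_uniq.
Qed.

Lemma measure_coords_fiber s : mu (coords @^-1` [set s]) = (2 ^- #|J|)%:E.
Proof.
rewrite coords_fiberE mu_std ?size_map -?enumT -?cardT //.
by rewrite (map_inj_uniq e_inj) enum_uniq.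
Qed.
End Coordinates.

Lemma uf_name_pointwise (R : realType) (K : choiceType)
    (mu : {measure set (cantorT K) -> \bar R}) (d : Order.disp_t)
    (A : ctbDistrLatticeType d) (H : cantorT K -> A -> bool) :
  (forall x, bool_hom (H x)) -> (forall a, measurable [set x | H x a]) ->
  uf_name mu (fun a => [set x | H x a]).
Proof.
move=> hom mH; have meqE X Y : X = Y -> meq mu X Y.
  by move=> ->; rewrite /meq setDv setU0 measure0.
split=> // [|a b|a]; apply: meqE; apply/seteqP; split=> x /=; have [H1 HI HC] := hom x.
- by [].
- by rewrite H1.
- by rewrite HI => /andP.
- by rewrite HI => -[-> ->].
- by rewrite HC => /negP.
- by rewrite HC => /negP.
Qed.

Lemma forces_in_diff_le (R : realType) (K : choiceType)
    (mu : {measure set (cantorT K) -> \bar R}) (d : Order.disp_t)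
    (A : ctbDistrLatticeType d) (U V : A -> set (cantorT K))
    (P : set (cantorT K)) (a : A) :
  measurable P -> measurable (U a `\` V a) -> forces_in_diff mu U V P a ->
  (mu P <= mu (U a `\` V a))%E.
Proof.
move=> mP mD; rewrite /forces_in_diff => fP.
rewrite (measureDI mu mP mD) [X in (X + _)%E](_ : _ = 0%E) ?add0e ?measureIr //.
Qed.

Section FfunSplit.
Variables (J : finType) (T : Type).

Definition ffun_split (s : {ffun bool * J -> T}) : {ffun J -> T} * {ffun J -> T} :=
  ([ffun j => s (false, j)], [ffun j => s (true, j)]).

Definition ffun_merge (p : {ffun J -> T} * {ffun J -> T}) : {ffun bool * J -> T} :=
  [ffun bj => (if bj.1 then p.2 else p.1) bj.2].

Lemma ffun_splitK : cancel ffun_split ffun_merge.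
Proof. by move=> s; apply/ffunP => -[[] j]; rewrite !ffunE. Qed.

Lemma ffun_mergeK : cancel ffun_merge ffun_split.
Proof. by move=> [u v]; congr pair; apply/ffunP => j; rewrite !ffunE. Qed.
End FfunSplit.

Lemma card_leave_le (I : finType) (g : I * I -> I) (S : {set I}) :
  (forall p, p.1 != p.2 -> g p = p.2) ->
  (4 * #|[set p : I * I | (p.1 \in S) && (g p \notin S)]%SET|
    <= #|I| ^ 2 + 4 * #|I|)%N.
Proof.
move=> g_offdiag; set W := [set p | _]%SET.
have W_sub : W \subset finset.setX S (~: S) :|: [set (u, u) | u : I]%SET.
  apply/fintype.subsetP => -[u v]; rewrite !inE /=; case: (eqVneq u v) => [<- _|uv].
    by rewrite imset_f ?orbT.
  by rewrite g_offdiag // => ->.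
have card_W : (#|W| <= #|S| * #|~: S| + #|I|)%N.
  apply: leq_trans (subset_leq_card W_sub) _; apply: leq_trans (leq_card_setU _ _) _.
  by rewrite cardsX leq_add // leq_imset_card.
have := (nat_AGM2 #|S| #|~: S|).1; rewrite cardsC; lia.
Qed.

Section Construction.
Variables (R : realType) (K : choiceType) (mu : {measure set (cantorT K) -> \bar R}).
Hypothesis mu_std : is_std_product_measure mu.
Variables (d : Order.disp_t) (A : ctbDistrLatticeType d) (J : finType) (j0 : J).
Local Notation I := {ffun J -> bool}.
Variables (e : bool * J -> K) (h : I -> A -> bool).
Hypotheses (e_inj : injective e) (h_hom : forall u, bool_hom (h u)) (h_inj : injective h).

Definition pair_coords (x : cantorT K) : I * I := ffun_split (coords e x).

Lemma pair_coords_fiberE p :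
  pair_coords @^-1` [set p] = coords e @^-1` [set ffun_merge p].
Proof.
apply/seteqP; split=> x; rewrite /pair_coords /=; [move=> <-|move=> ->].
  by rewrite ffun_splitK.
by rewrite ffun_mergeK.
Qed.

Lemma measurable_pair_coords_fiber p : measurable (pair_coords @^-1` [set p]).
Proof. by rewrite pair_coords_fiberE; exact: measurable_coords_fiber. Qed.

Lemma measure_pair_coords_fiber p :
  mu (pair_coords @^-1` [set p]) = ((#|I|%:R ^+ 2)^-1)%:E.
Proof.
rewrite pair_coords_fiberE measure_coords_fiber // card_prod card_ffun !card_bool.
by rewrite natrX -exprM mulnC.
Qed.

Definition partner (p : I * I) : I := if p.1 == p.2 then [ffun j => ~~ p.1 j] else p.2.

Lemma partner_neq p : partner p != p.1.
Proof.
rewrite /partner; case: (eqVneq p.1 p.2) => [_|]; last by rewrite eq_sym.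
by apply/eqP => /ffunP/(_ j0); rewrite ffunE; case: (p.1 j0).
Qed.

Lemma partner_offdiag p : p.1 != p.2 -> partner p = p.2.
Proof. by rewrite /partner => /negbTE ->. Qed.

Definition name_U (a : A) := [set x | h (pair_coords x).1 a].
Definition name_V (a : A) := [set x | h (partner (pair_coords x)) a].

Lemma uf_name_U : uf_name mu name_U.
Proof.
apply: uf_name_pointwise => [x|a]; first exact: h_hom.
exact: (measurable_preimage_fin measurable_pair_coords_fiber [set p | h p.1 a]).
Qed.

Lemma uf_name_V : uf_name mu name_V.
Proof.
apply: uf_name_pointwise => [x|a]; first exact: h_hom.
exact: (measurable_preimage_fin measurable_pair_coords_fiber [set p | h (partner p) a]).
Qed.

Lemma forces_neq_UV : forces_neq mu name_U name_V.
Proof.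
have [[mU _ _ _] [mV _ _ _]] := (uf_name_U, uf_name_V).
move=> P mP P0; have [p Pp] := exists_fiber_meets measurable_pair_coords_fiber mP P0.
have [a hpa] : exists a, h p.1 a != h (partner p) a.
  apply: contrapT => hpE; move/negP: (partner_neq p); apply; apply/eqP/h_inj.
  apply/funext => a; apply/eqP; rewrite eq_sym.
  by apply/negPn/negP => ne; apply: hpE; exists a.
exists a; apply: lt_le_trans Pp _; apply: le_measure; rewrite ?inE.
- by apply: measurableI => //; exact: measurable_pair_coords_fiber.
- by apply: measurableI => //; apply: measurableU; apply: measurableD.
- move=> x [Px px]; split=> //; rewrite /name_U /name_V /setU /setD /mkset px.
  by move: hpa; case: (h p.1 a); case: (h (partner p) a); [|left|right|].
Qed.

Lemma measure_UV_le a :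
  (mu (name_U a `\` name_V a) <= (1 / 4 + #|I|%:R^-1)%:E)%E.
Proof.
set S := [set u | h u a]%SET.
set W := [set p | (p.1 \in S) && (partner p \notin S)]%SET.
have -> : name_U a `\` name_V a = pair_coords @^-1` [set p | p \in W].
  apply/seteqP; split=> x; rewrite /name_U /name_V /setD /preimage /mkset;
    case: (pair_coords x) => u v; rewrite !inE.
    by case=> -> /negP.
  by case/andP=> -> /negP.
rewrite (measure_preimage_uniform measurable_pair_coords_fiber measure_pair_coords_fiber).
rewrite lee_fin; have := card_leave_le S partner_offdiag; rewrite -/W.
set w := #|W|; set N := #|I|; move=> card_W.
have N0 : (0 : R) < N%:R by rewrite ltr0n; apply/card_gt0P; exists [ffun=> true].
move: card_W; rewrite -(ler_nat R) natrM natrD natrX natrM => card_W.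
rewrite ler_pdivrMr ?exprn_gt0 //.
have -> : (1 / 4 + N%:R^-1) * N%:R ^+ 2 = N%:R ^+ 2 / 4 + N%:R :> R.
  by field; rewrite gt_eqF.
lra.
Qed.
End Construction.

Lemma exists_inv_pow2_lt (R : realType) (eps : R) : 0 < eps ->
  exists n, 1 / 2 ^+ n.+1 < eps.
Proof.
move=> eps0; have [N _ hN] := near_infty_natSinv_expn_lt (PosNum eps0).
by exists N; apply: hN; rewrite /= leqnSn.
Qed.

Theorem corollary7p11 (R : realType) (K : choiceType)
  (mu : {measure set (cantorT K) -> \bar R})
  (d : Order.disp_t) (A : ctbDistrLatticeType d) :
  infinite_set [set: K] ->
  is_std_product_measure mu ->
  infinite_set [set: A] ->
  forall eps : R, 0 < eps ->
  exists U V : A -> set (cantorT K),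
    [/\ uf_name mu U, uf_name mu V, forces_neq mu U V &
      forall (P : set (cantorT K)) (a : A),
        measurable P -> (0 < mu P)%E -> forces_in_diff mu U V P a ->
        (mu P <= (1 / 4 + eps)%:E)%E].
Proof.
move=> Kinf mu_std Ainf eps eps0.
have [n n_eps] := exists_inv_pow2_lt eps0.
have [e e_inj] := exists_injective_of_infinite (bool * 'I_n.+1)%type Kinf.
have [h [h_hom h_inj]] := exists_injective_bool_homs {ffun 'I_n.+1 -> bool} Ainf.
have [U_name V_name] := (uf_name_U mu e_inj h_hom, uf_name_V mu e_inj h_hom).
exists (name_U e h), (name_V e h); split=> // [|P a mP _ fP].
  exact: (forces_neq_UV (mu := mu) ord0 e_inj h_hom h_inj).
have [[mU _ _ _] [mV _ _ _]] := (U_name, V_name).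
apply: le_trans (forces_in_diff_le mP (measurableD (mU a) (mV a)) fP) _.
apply: le_trans (measure_UV_le mu_std h e_inj a) _.
by rewrite lee_fin lerD2l card_ffun card_bool card_ord natrX -div1r ltW.
Qed.
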